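(* Let $A\subset\mathbf{Z}_{\geq0}$ be finite with $0\in A$, $N=\#A\geq 2$, $A(x)=\sum_{a\in A}x^a$. Suppose $A(x)$ has a spectrum $\{\theta_1,\dots,\theta_{N-1}\}$ with $\theta_1\notin\mathbf{Q}$. Then $A(x)$ has at least $N-1$ distinct roots $x$ with $|x|\neq 1$.
   Context: A set $\{\theta_1,\dots,\theta_{N-1}\}\subset(0,1)$ is called a spectrum for $A(x)$ if the $\theta_j$ are pairwise distinct and, with $\theta_0=0$, $A(e^{2\pi i(\theta_i-\theta_j)})=0$ for all $0\leq i,j\leq N-1$ with $i\neq j$. *)

From HB Require Import structures.
From mathcomp Require Import all_boot all_order all_algebra.
From mathcomp Require Import finmap.
From mathcomp Require Import complex.
From mathcomp Require Import reals trigo.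
Set Implicit Arguments. Unset Strict Implicit. Unset Printing Implicit Defensive.
Import Order.TTheory GRing.Theory Num.Theory.
Local Open Scope ring_scope.
Local Open Scope fset_scope.

Definition Apoly {R : realType} (A : {fset nat}) : {poly R[i]} :=
  \sum_(a <- A) 'X^a.

Definition expi (R : realType) (t : R) : R[i] :=
  Complex (cos (2 * pi * t)) (sin (2 * pi * t)).

(* theta 1, ..., theta (N-1) is a spectrum for A(x), with N = #A and the
   convention theta 0 = 0 (the value theta 0 given by the function is
   required to be 0). *)
Definition is_spectrum (R : realType) (A : {fset nat}) (theta : nat -> R) :=
  let N := #|` A| in
  [/\ theta 0%N = 0,
      (forall i, (0 < i < N)%N -> 0 < theta i < 1),
      (forall i j, (0 < i < N)%N -> (0 < j < N)%N -> i != j -> theta i != theta j)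
    & (forall i j, (i < N)%N -> (j < N)%N -> i != j ->
         (@Apoly R A).[expi (theta i - theta j)] = 0)].

From HB Require Import structures.
From mathcomp Require Import all_boot all_order all_algebra all_field.
From mathcomp Require Import finmap complex boolp reals trigo lra.
Set Implicit Arguments.
Unset Strict Implicit.
Unset Printing Implicit Defensive.
Import Order.TTheory GRing.Theory Num.Theory.
Local Open Scope ring_scope.

(* Put u_i = e(theta_i), so that A(u_i / u_j) = 0 for i <> j, with u_0 = 1.
   All roots of A lie in a number field K that is normal over Q.  As theta_1
   is irrational, u_1 is not a root of unity, so by Kronecker's theorem one of
   its conjugates lies off the unit circle; an automorphism f of K moving u_1
   there keeps every f(u_i) / f(u_j) a root of A while |f(u_0)| = 1 <> |f(u_1)|.
   Dividing the f(u_i) of smaller modulus by one of maximal modulus, and one of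
   minimal modulus by those of maximal modulus, yields N roots off the circle. *)

(** * Polynomials with integer coefficients *)

Lemma map_poly_intr_rmorph (R S : nzRingType) (f : {rmorphism R -> S}) (p : {poly int}) :
  map_poly f (map_poly intr p) = map_poly intr p.
Proof. by rewrite -map_poly_comp; apply: eq_map_poly => c /=; apply: rmorph_int. Qed.

Lemma rmorph_horner_intr (R S : nzRingType) (f : {rmorphism R -> S}) (p : {poly int}) x :
  f (map_poly intr p).[x] = (map_poly intr p).[f x].
Proof. by rewrite -horner_map map_poly_intr_rmorph. Qed.

Lemma fmorph_root_intr (K : fieldType) (R : nzRingType) (f : {rmorphism K -> R})
    (p : {poly int}) x :
  root (map_poly intr p) (f x) = root (map_poly intr p) x.
Proof. by rewrite /root -rmorph_horner_intr fmorph_eq0. Qed.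

Lemma root_splitting_rmorph (K : fieldType) (S : idomainType) (f : {rmorphism K -> S})
    (p : {poly int}) (s : seq K) z :
  map_poly intr p = \prod_(y <- s) ('X - y%:P) ->
  root (map_poly intr p) z -> z \in map f s.
Proof.
move=> Dp; rewrite -(map_poly_intr_rmorph f) Dp rmorph_prod.
rewrite (eq_bigr (fun y => 'X - (f y)%:P)) => [|y _]; last first.
  by rewrite rmorphB /= map_polyX map_polyC.
by rewrite -(big_map f xpredT (fun y => 'X - y%:P)) root_prod_XsubC.
Qed.

Lemma monic_dvdp_int (q : {poly rat}) (p : {poly int}) :
  q \is monic -> p \is monic -> q %| map_poly intr p ->
  exists2 qZ : {poly int}, qZ \is monic & map_poly intr qZ = q.
Proof.
move=> mon_q mon_p /dvdpP_rat_int[q1 [a nz_a Dq] [r Dp]].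
have lq1_lr : lead_coef q1 * lead_coef r = 1 by rewrite -lead_coefM -Dp (monicP mon_p).
have lq1_sq : lead_coef q1 ^+ 2 = 1.
  have /eqP : (`|lead_coef q1| * `|lead_coef r| = 1)%N by rewrite -abszM lq1_lr.
  by rewrite muln_eq1 => /andP[/eqP lq1_1 _]; rewrite -real_normK ?num_real // -abszE lq1_1.
have a_lq1 : a * (lead_coef q1)%:~R = 1.
  by move/monicP: mon_q; rewrite Dq lead_coefZ lead_coef_map_inj //; apply: intr_inj.
have Da : a = (lead_coef q1)%:~R.
  have : a * (lead_coef q1)%:~R * (lead_coef q1)%:~R = (lead_coef q1)%:~R.
    by rewrite a_lq1 mul1r.
  by rewrite -mulrA -rmorphM /= -expr2 lq1_sq rmorph1 mulr1.
exists (lead_coef q1 *: q1); first by rewrite monicE lead_coefZ -expr2 lq1_sq.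
by rewrite map_polyZ /= -Da Dq.
Qed.

(** * Kronecker's theorem *)

Lemma map_mxXn (R S : nzRingType) (f : {rmorphism R -> S}) n (B : 'M[R]_n) k :
  map_mx f (B ^+ k) = map_mx f B ^+ k.
Proof.
elim: k => [|k IHk]; first by rewrite !expr0 map_mx1.
by rewrite !exprS -!mulmxE map_mxM IHk.
Qed.

Lemma eigenvalueXn (F : fieldType) n (B : 'M[F]_n) x k :
  eigenvalue B x -> eigenvalue (B ^+ k) (x ^+ k).
Proof.
move=> /eigenvalueP[v Bv nz_v]; apply/eigenvalueP; exists v => //.
elim: k => [|k IHk]; first by rewrite !expr0 scale1r mulmx1.
by rewrite exprSr -mulmxE mulmxA IHk -scalemxAl Bv scalerA exprSr.
Qed.

Lemma has_eigenvalue_prod_XsubC (F : fieldType) n (B : 'M[F]_n.+1) (rs : seq F)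
    (v : 'rV_n.+1) :
  v != 0 -> v *m horner_mx B (\prod_(r <- rs) ('X - r%:P) : {poly F}) = 0 ->
  has (eigenvalue B) rs.
Proof.
elim: rs v => [|r rs IHrs] v nz_v.
  by rewrite big_nil rmorph1 mulmx1 => v0; rewrite v0 eqxx in nz_v.
rewrite big_cons rmorphM /= -mulmxE mulmxA /=.
have [Bv|nz_vB] := eqVneq (v *m horner_mx B ('X - r%:P)) 0.
  move=> _; apply/orP; left; apply/eigenvalueP; exists v => //.
  move/eqP: Bv; rewrite rmorphB /= horner_mx_X horner_mx_C mulmxBr.
  by rewrite mul_mx_scalar subr_eq0 => /eqP.
by move/(IHrs _ nz_vB) ->; rewrite orbT.
Qed.

Lemma eigenvalueXn_root (F : closedFieldType) n (B : 'M[F]_n) k lam :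
  (0 < k)%N -> eigenvalue (B ^+ k) lam ->
  exists2 r, eigenvalue B r & r ^+ k = lam.
Proof.
case: n B => [|n] B k_gt0 /eigenvalueP[v Bv nz_v]; first by rewrite thinmx0 eqxx in nz_v.
have [rs Drs] := closed_field_poly_normal ('X^k - lam%:P : {poly F}).
rewrite lead_coefXnsubC // scale1r in Drs.
have rsE r : r \in rs -> r ^+ k = lam.
  move=> r_rs; have : root ('X^k - lam%:P) r by rewrite Drs root_prod_XsubC.
  by rewrite /root !hornerE subr_eq0 => /eqP.
have : v *m horner_mx B ('X^k - lam%:P) = 0.
  rewrite rmorphB rmorphXn /= horner_mx_X horner_mx_C.
  by rewrite mulmxBr Bv mul_mx_scalar subrr.
by rewrite Drs => /(has_eigenvalue_prod_XsubC nz_v)/hasP[r /rsE]; exists r.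
Qed.

Lemma bin_leq_exp2 n i : ('C(n, i) <= 2 ^ n)%N.
Proof.
elim: n i => [|n IHn] [|i] //; rewrite ?bin0 ?expn_gt0 // binS expnS mul2n -addnn.
exact: leq_add.
Qed.

Lemma norm_coef_prod_XsubC_le (C : numDomainType) (rs : seq C) i :
  all (fun z => `|z| <= 1) rs ->
  `|(\prod_(z <- rs) ('X - z%:P))`_i| <= 'C(size rs, i)%:R.
Proof.
elim: rs i => [|z rs IHrs] i /=.
  by rewrite big_nil coefC; case: i => [|i]; rewrite ?normr1 ?normr0.
case/andP=> z_le1 rs_le1; rewrite big_cons mulrBl coefB coefXM coefCM.
have zrs_le j : `|z * (\prod_(y <- rs) ('X - y%:P))`_j| <= 'C(size rs, j)%:R.
  by rewrite normrM -[_%:R]mul1r ler_pM ?IHrs.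
case: i => [|i] /=; first by rewrite sub0r normrN bin0 -(bin0 (size rs)).
by rewrite (le_trans (ler_normB _ _)) // binS natrD addrC lerD ?IHrs.
Qed.

Lemma norm_coef_monic_disc_le (C : numClosedFieldType) (q : {poly int}) i :
  q \is monic -> (forall z : C, root (map_poly intr q) z -> `|z| <= 1) ->
  `|q`_i| <= (2 ^ (size q).-1)%:R.
Proof.
move=> mon_q q_disc.
have [rs Drs] := closed_field_poly_normal (map_poly (intr : int -> C) q).
rewrite (monicP (monic_map _ mon_q)) scale1r in Drs.
have size_rs : size rs = (size q).-1.
  by rewrite -(size_map_inj_poly (@intr_inj C)) // Drs size_prod_XsubC.
have rs_le1 : all (fun z : C => `|z| <= 1) rs.
  by apply/allP => z z_rs; rewrite q_disc // Drs root_prod_XsubC.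
rewrite -(ler_int C) intr_norm rmorph_nat -(coef_map (intr : int -> C)) Drs.
apply: le_trans (norm_coef_prod_XsubC_le i rs_le1) _.
by rewrite size_rs ler_nat bin_leq_exp2.
Qed.

Lemma pigeonhole_fiber (T : finType) m K (g : 'I_K -> T) :
  (m * #|T| < K)%N -> exists t, (m < #|[pred j | g j == t]|)%N.
Proof.
move=> lt_mT_K; apply/existsP; apply: contraLR lt_mT_K; rewrite negb_exists -leqNgt.
move=> /forallP small_fibers; rewrite -{1}[K]card_ord -sum1_card.
rewrite (partition_big g xpredT) //= mulnC -sum1_card big_distrl /=.
by apply: leq_sum => t _; rewrite mul1n sum1_card leqNgt small_fibers.
Qed.

Lemma bounded_int_polys_repeat (n b m : nat) (q : nat -> {poly int}) :
  (forall k, (size (q k) <= n)%N) -> (forall k i, `|(q k)`_i| <= b%:Z) ->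
  exists p (s : seq nat), [/\ uniq s, (m < size s)%N & all (fun k => q k == p) s].
Proof.
move=> size_q q_le_b.
have shift_ge0 k i : 0 <= (q k)`_i + b%:Z.
  by move: (q_le_b k i); rewrite ler_norml => /andP[? _]; rewrite -[b%:Z]opprK subr_ge0.
pose code (p : {poly int}) : {ffun 'I_n -> 'I_(b.*2).+1} :=
  [ffun i : 'I_n => inord (absz (p`_i + b%:Z))].
have code_inj k1 k2 : code (q k1) = code (q k2) -> q k1 = q k2.
  move=> eq_code; apply/polyP => i; have [lt_in|le_ni] := ltnP i n; last first.
    by rewrite !nth_default // (leq_trans (size_q _)).
  have shift_lt k : (absz ((q k)`_i + b%:Z)%R < (b.*2).+1)%N.
    rewrite ltnS -lez_nat abszE ger0_norm // -addnn PoszD lerD2r.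
    exact: le_trans (ler_norm _) (q_le_b k i).
  move/(congr1 (fun f : {ffun 'I_n -> 'I_(b.*2).+1} => val (f (Ordinal lt_in)))): eq_code.
  rewrite !ffunE /= !inordK // => /(congr1 Posz); rewrite !abszE.
  by rewrite !ger0_norm // => /addIr.
pose K := (m * #|{: {ffun 'I_n -> 'I_(b.*2).+1}}|).+1.
have [t fiber_t] := @pigeonhole_fiber _ m K (fun j => code (q j)) (ltnSn _).
have [j0 /eqP code_j0] : exists j0, j0 \in [pred j : 'I_K | code (q j) == t].
  by apply/card_gt0P; apply: leq_ltn_trans fiber_t.
exists (q j0), [seq val j | j <- enum [pred j : 'I_K | code (q j) == t]]; split.
- by rewrite map_inj_uniq ?enum_uniq //; apply: val_inj.
- by rewrite size_map -cardE.
apply/allP => k /mapP[j]; rewrite mem_enum inE => /eqP code_j ->.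
by apply/eqP/code_inj; rewrite code_j code_j0.
Qed.

Lemma exprs_eq_unity (F : idomainType) (x : F) i j :
  x != 0 -> i != j -> x ^+ i = x ^+ j -> exists2 m, (0 < m)%N & x ^+ m = 1.
Proof.
wlog lt_ij : i j / (i < j)%N => [wlog_ij nz_x neq_ij eq_xij|nz_x _ eq_xij].
  have [lt_ij|lt_ji|eq_ij] := ltngtP i j; last by rewrite eq_ij eqxx in neq_ij.
    exact: wlog_ij lt_ij nz_x neq_ij eq_xij.
  by apply: (wlog_ij j i lt_ji nz_x); [rewrite eq_sym | rewrite eq_xij].
exists (j - i)%N; first by rewrite subn_gt0.
by apply: (mulfI (expf_neq0 i nz_x)); rewrite mulr1 -exprD subnKC ?(ltnW lt_ij).
Qed.

(* The polynomials [char_poly (companionmx p ^+ k)], whose roots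
   are the [k]-th powers of those of [p], are monic integer polynomials of
   fixed degree with bounded coefficients, so one of them has more roots of
   the form [x ^+ k] than its degree allows unless two of them coincide. *)
Theorem kronecker (C : numClosedFieldType) (p : {poly int}) (x : C) :
  p \is monic -> (forall z : C, root (map_poly intr p) z -> `|z| = 1) ->
  root (map_poly intr p) x -> exists2 m, (0 < m)%N & x ^+ m = 1.
Proof.
move=> mon_p p_circle px.
have nz_x : x != 0 by rewrite -normr_eq0 p_circle ?oner_eq0.
pose n := (size p).-1.
pose Cp := map_mx (intr : int -> C) (companionmx p).
have char_Cp : char_poly Cp = map_poly intr p by rewrite -map_char_poly companionmxK.
pose q k : {poly int} := char_poly (companionmx p ^+ k.+1).
have map_q k : map_poly (intr : int -> C) (q k) = char_poly (Cp ^+ k.+1).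
  by rewrite map_char_poly map_mxXn.
have q_disc k (z : C) : root (map_poly intr (q k)) z -> `|z| <= 1.
  rewrite map_q -eigenvalue_root_char => /eigenvalueXn_root[//|r].
  by rewrite eigenvalue_root_char char_Cp => /p_circle r1 <-; rewrite normrX r1 expr1n.
have q_root k : root (map_poly intr (q k)) (x ^+ k.+1).
  by rewrite map_q -eigenvalue_root_char eigenvalueXn // eigenvalue_root_char char_Cp.
have size_q k : size (q k) = n.+1 by rewrite size_char_poly.
have q_bound k i : `|(q k)`_i| <= (2 ^ n)%:Z.
  have := @norm_coef_monic_disc_le C (q k) i (char_poly_monic _) (q_disc k).
  by rewrite size_q natz.
have [p0 [s [uniq_s size_s /allP q_s]]] :=
  @bounded_int_polys_repeat n.+1 (2 ^ n) n q (fun k => eq_leq (size_q k)) q_bound.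
have {}q_s k : k \in s -> q k = p0 by move/q_s/eqP.
have [k0 k0_s] : exists k0, k0 \in s.
  by exists (nth 0%N s 0); rewrite mem_nth // (leq_ltn_trans _ size_s).
have : ~~ uniq [seq x ^+ k.+1 | k <- s].
  apply: contraL size_s => uniq_xs; rewrite -leqNgt.
  have nz_p0 : map_poly (intr : int -> C) p0 != 0.
    by rewrite -(q_s k0) // map_q -size_poly_eq0 size_char_poly.
  have size_p0 : size (map_poly (intr : int -> C) p0) = n.+1.
    by rewrite -(q_s k0) // map_q size_char_poly.
  have := max_poly_roots nz_p0 _ uniq_xs; rewrite size_map size_p0; apply.
  by apply/allP => _ /mapP[k k_s ->]; rewrite -(q_s k k_s) q_root.
case/(uniqPn 0) => a [b [lt_ab lt_b]]; rewrite size_map in lt_b.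
have lt_a := ltn_trans lt_ab lt_b.
rewrite !(nth_map 0%N) //; apply: exprs_eq_unity => //.
by rewrite eqSS nth_uniq // ltn_eqF.
Qed.

(** * Number fields *)

Section NumFieldIn.
Variable L : numFieldType.
Local Notation QtoL := (@ratr L).

Lemma num_field_PET (s : seq L) : {in s, forall x, algebraicOver QtoL x} ->
  exists2 z, algebraicOver QtoL z &
    (exists a : nat ^ size s, z = \sum_(i < size s) s`_i *+ a i)
    /\ exists ps, s = [seq (map_poly QtoL p).[z] | p <- ps].
Proof.
elim: s => [|x s IHs] alg_xs.
  exists 0; first exact: algebraic0.
  by split; [exists [ffun _ => 2%N]; rewrite big_ord0 | exists nil].
have alg_x : algebraicOver QtoL x by apply: alg_xs; rewrite mem_head.
have [|z alg_z [[a Dz] [ps Ds]]] := IHs.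
  by move=> y s_y; apply: alg_xs; rewrite in_cons s_y orbT.
have [rx nz_rx rx0] := alg_x.
have [rz nz_rz rz0] := algebraic_opp alg_z.
have [n [[pz Dpz] [px Dpx]]] := pchar0_PET nz_rz rz0 nz_rx rx0 (@pchar_num rat).
rewrite /= opprK in Dpz Dpx.
exists (x *+ n + z).
  apply: algebraic_add alg_z.
  by rewrite -mulr_natr -(rmorph_nat QtoL); apply: algebraic_mul alg_x (algebraic_id _ _).
split.
  exists [ffun i => oapp a n (unlift ord0 i)].
  rewrite /= big_ord_recl ffunE unlift_none Dz; congr (_ + _).
  by apply: eq_bigr => i _; rewrite ffunE liftK.
exists (px :: [seq p \Po - pz | p <- ps]); rewrite map_cons Dpx; congr (_ :: _).
rewrite -map_comp Ds; apply: eq_map => p /=.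
by rewrite map_comp_poly horner_comp rmorphN hornerN Dpz opprK.
Qed.

Lemma algebraic_min_poly (z : L) : algebraicOver QtoL z ->
  exists r : {poly rat}, [/\ r != 0, root (map_poly QtoL r) z &
    forall q, root (map_poly QtoL q) z -> q != 0 -> (size r <= size q)%N].
Proof.
move=> alg_z; pose P n := `[< exists r : {poly rat},
  [&& r != 0, root (map_poly QtoL r) z & size r == n] >].
have P_size q : root (map_poly QtoL q) z -> q != 0 -> P (size q).
  by move=> qz nz_q; apply/asboolP; exists q; rewrite nz_q qz eqxx.
have [r0 nz_r0 r0z] := alg_z.
case: (ex_minnP (ex_intro P _ (P_size r0 r0z nz_r0))) => n /asboolP[r].
case/and3P=> nz_r rz /eqP <- min_r.
by exists r; split=> // q qz nz_q; apply/min_r/P_size.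
Qed.

Lemma num_field_exists_gen (s : seq L) : {in s, forall x, algebraicOver QtoL x} ->
  exists (Qs : fieldExtType rat) (QsL : {rmorphism Qs -> L}) (s1 : seq Qs),
    map QsL s1 = s /\ <<1 & s1>>%VS = fullv.
Proof.
move=> alg_s; have [z alg_z [[a Dz] [ps Ds]]] := num_field_PET alg_s.
have [r [nz_r rz0 min_r]] := algebraic_min_poly alg_z.
have irr_r : irreducible_poly r by apply/(subfx_irreducibleP rz0 nz_r).
pose Qs := SubFieldExtType rz0 irr_r; pose z1 : Qs := subfx_root _ z r.
have [QsL QsL_z1] : exists QsL : {rmorphism Qs -> L}, QsL z1 = z.
  by exists (@subfx_inj _ _ QtoL z r); apply: subfx_inj_root.
pose inQs := fieldExt_horner z1.
have inQsK p : QsL (inQs p) = (map_poly QtoL p).[z].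
  rewrite /inQs /fieldExt_horner /horner_morph /= -horner_map QsL_z1.
  rewrite -map_poly_comp; congr _.[z].
  by apply: eq_map_poly => b /=; rewrite alg_num_field fmorph_rat.
exists Qs, QsL, (map inQs ps); split; first by rewrite -map_comp Ds (eq_map inQsK).
have sz_ps : size ps = size s by rewrite Ds size_map.
have inQs_onto x : exists p, inQs p = x by have [p ->] := subfxEroot rz0 nz_r x; exists p.
apply/vspaceP=> x; rewrite memvf; have [p {x}<-] := inQs_onto x.
elim/poly_ind: p => [|p b ApQs]; first by rewrite /inQs rmorph0 mem0v.
rewrite /inQs rmorphD rmorphM /= fieldExt_hornerX fieldExt_hornerC -/inQs /=.
suffices -> : z1 = \sum_(i < size s) (map inQs ps)`_i *+ a i.
  apply: memvD; last by rewrite memvZ ?mem1v.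
  apply: memvM => //; apply: memv_suml => i _.
  by rewrite rpredMn ?seqv_sub_adjoin ?mem_nth // size_map sz_ps.
apply: (fmorph_inj QsL); rewrite QsL_z1 Dz rmorph_sum; apply: eq_bigr => i _.
by rewrite rmorphMn {1}Ds !(nth_map 0) ?sz_ps //= inQsK.
Qed.

End NumFieldIn.

Lemma rmorph_to_conjugate (Qs : fieldExtType rat) (s : seq Qs) (p : {poly int}) :
  <<1 & s>>%VS = fullv -> map_poly intr p = \prod_(y <- s) ('X - y%:P) ->
  forall w y : Qs, root (minPoly 1 w) y -> exists f : {rmorphism Qs -> Qs}, f w = y.
Proof.
move=> gen_s Dp w y wy.
have idwy : root (map_poly \1%VF (minPoly 1 w)) y.
  by rewrite (eq_map_poly (fun v => id_lfunE v)) map_poly_id.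
have homg := kHomExtendP (sub1v _) (kHom1 1 1) idwy.
have p_over1 : map_poly intr p \is a polyOver (1%VS : {vspace Qs}).
  by apply/polyOverP => i; rewrite coef_map /= -(rmorph_int (in_alg Qs)) memvZ ?memv_line.
have split_p : splittingFieldFor <<1; w>> (map_poly intr p) fullv.
  apply: splittingFieldForS (sub1v _) (subvf _) _.
  by exists s; rewrite ?gen_s // Dp eqpxx.
have [h homh Dh] := kHom_extends (sub1v _) homg p_over1 split_p.
pose hM := GRing.isMonoidMorphism.Build _ _ h (kHom_monoid_morphism homh).
exists (HB.pack (fun_of_lfun h) hM : {lrmorphism _ -> _}).
by rewrite /= -Dh ?memv_adjoin // (kHomExtend_val (kHom1 1 1) idwy).
Qed.

Lemma splitting_num_field (C : numClosedFieldType) (p : {poly int}) : p \is monic ->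
  exists (Qs : fieldExtType rat) (QsC : {rmorphism Qs -> C}) (s : seq Qs),
    <<1 & s>>%VS = fullv /\ map_poly intr p = \prod_(y <- s) ('X - y%:P).
Proof.
move=> mon_p; have [rs Drs] := closed_field_poly_normal (map_poly (intr : int -> C) p).
rewrite (monicP (monic_map _ mon_p)) scale1r in Drs.
have alg_rs : {in rs, forall x, algebraicOver (@ratr C) x}.
  move=> x rs_x; exists (map_poly intr p); first by rewrite monic_neq0 ?monic_map.
  by rewrite map_poly_intr_rmorph Drs root_prod_XsubC.
have [Qs [QsC [s [Ds gen_s]]]] := num_field_exists_gen alg_rs.
exists Qs, QsC, s; split=> //; apply: (map_poly_inj QsC).
rewrite map_poly_intr_rmorph Drs rmorph_prod -Ds big_map.
by apply: eq_bigr => y _; rewrite rmorphB /= map_polyX map_polyC.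
Qed.

Lemma conjugate_off_unit_circle (C : numClosedFieldType) (Qs : fieldExtType rat)
    (QsC : {rmorphism Qs -> C}) (s : seq Qs) (p : {poly int}) (w : Qs) :
  p \is monic -> <<1 & s>>%VS = fullv -> map_poly intr p = \prod_(y <- s) ('X - y%:P) ->
  root (map_poly intr p) w -> (forall m, (0 < m)%N -> QsC w ^+ m != 1) ->
  exists f : {rmorphism Qs -> Qs}, `|QsC (f w)| != 1.
Proof.
move=> mon_p gen_s Dp pw w_not_unity.
have /polyOver1P[q Dq] := minPolyOver 1 w.
have mon_q : q \is monic by rewrite -(map_monic (in_alg Qs)) -Dq monic_minPoly.
have q_dvd_p : q %| map_poly intr p.
  rewrite -(dvdp_map (in_alg Qs)) -Dq map_poly_intr_rmorph minPoly_dvdp //.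
  by apply/polyOver1P; exists (map_poly intr p); rewrite map_poly_intr_rmorph.
have [qZ mon_qZ DqZ] := monic_dvdp_int mon_q mon_p q_dvd_p.
have minPolyE : minPoly 1 w = map_poly intr qZ by rewrite Dq -DqZ map_poly_intr_rmorph.
have [rs Drs] := closed_field_poly_normal (map_poly (intr : int -> C) qZ).
rewrite (monicP (monic_map _ mon_qZ)) scale1r in Drs.
have [/hasP[z rs_z z_off]|/hasPn rs_on] := boolP (has (fun z => `|z| != 1) rs).
  have qZz : root (map_poly intr qZ) z by rewrite Drs root_prod_XsubC.
  have : root (map_poly intr p) z.
    apply: root_dvdp qZz.
    rewrite -(map_poly_intr_rmorph (@ratr C)) -(map_poly_intr_rmorph (@ratr C) p).
    by rewrite DqZ dvdp_map.
  case/(root_splitting_rmorph QsC Dp)/mapP => y _ Dz.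
  have [|f fw] := rmorph_to_conjugate gen_s Dp (w := w) (y := y).
    by rewrite minPolyE -(fmorph_root_intr QsC) -Dz.
  by exists f; rewrite fw -Dz.
have qZ_circle (z : C) : root (map_poly (intr : int -> C) qZ) z -> `|z| = 1.
  by rewrite Drs root_prod_XsubC => /rs_on/negPn/eqP.
have qZw : root (map_poly intr qZ) (QsC w).
  by rewrite fmorph_root_intr -minPolyE root_minPoly.
have [m m_gt0 wm] := kronecker mon_qZ qZ_circle qZw.
by have := w_not_unity m m_gt0; rewrite wm eqxx.
Qed.

Lemma exists_preimages (aT rT : eqType) (f : aT -> rT) (s : seq aT) (P : pred nat)
    (u : nat -> rT) (x0 : aT) :
  {in P, forall i, u i \in map f s} -> exists w, {in P, forall i, f (w i) = u i}.
Proof.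
move=> u_in; exists (fun i => nth x0 s (index (u i) (map f s))) => i /u_in u_i.
by rewrite -(nth_map x0 (f x0)) ?nth_index // -(size_map f) index_mem.
Qed.

Lemma conjugate_family_off_unit_circle (C : numClosedFieldType) (p : {poly int}) N
    (u : nat -> C) :
  p \is monic -> (1 < N)%N -> u 0%N = 1 -> (forall i, (i < N)%N -> u i != 0) ->
  (forall i j, (i < N)%N -> (j < N)%N -> i != j -> root (map_poly intr p) (u i / u j)) ->
  (forall m, (0 < m)%N -> u 1%N ^+ m != 1) ->
  exists v : nat -> C, [/\ forall i, (i < N)%N -> v i != 0,
    forall i j, (i < N)%N -> (j < N)%N -> i != j -> root (map_poly intr p) (v i / v j)
    & `|v 0%N| != `|v 1%N|].
Proof.
move=> mon_p N_gt1 u0 u_neq0 u_ratio u1_not_unity.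
have u_root i : (0 < i < N)%N -> root (map_poly intr p) (u i).
  case/andP=> i_gt0 iN; have := u_ratio i 0%N iN (ltnW N_gt1) (lt0n_neq0 i_gt0).
  by rewrite u0 divr1.
have [Qs [QsC [s [gen_s Ds]]]] := splitting_num_field C mon_p.
have [w QsC_w] : exists w, {in gtn N, forall i, QsC (w i) = u i}.
  apply: (exists_preimages (s := 1 :: s) 0) => -[_|i iN] /=.
    by rewrite u0 -(rmorph1 QsC) mem_head.
  by rewrite in_cons (root_splitting_rmorph _ Ds) ?orbT ?u_root.
have w0 : w 0%N = 1 by apply: (fmorph_inj QsC); rewrite QsC_w ?rmorph1 // inE ltnW.
have [f f_off] : exists f : {rmorphism Qs -> Qs}, `|QsC (f (w 1%N))| != 1.
  apply: conjugate_off_unit_circle mon_p gen_s Ds _ _.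
    by rewrite -(fmorph_root_intr QsC) QsC_w ?u_root.
  by move=> m; rewrite QsC_w //; apply: u1_not_unity.
exists (fun i => QsC (f (w i))); split.
- by move=> i iN; rewrite !fmorph_eq0 -(fmorph_eq0 QsC) QsC_w ?u_neq0.
- move=> i j iN jN ij; rewrite -!fmorph_div !fmorph_root_intr -(fmorph_root_intr QsC).
  by rewrite fmorph_div !QsC_w ?u_ratio.
by rewrite w0 !rmorph1 normr1 eq_sym.
Qed.

(** * The exponential e(t) *)

Section Expi.
Variable R : realType.
Implicit Types s t : R.

Lemma expiD s t : expi (s + t) = expi s * expi t.
Proof. by rewrite /expi mulrDr cosD sinD; congr Complex; rewrite addrC. Qed.

Lemma expi0 : expi (0 : R) = 1.
Proof. by rewrite /expi mulr0 cos0 sin0. Qed.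

Lemma expi_neq0 t : expi t != 0.
Proof.
apply/eqP => t0; have /eqP := expiD t (- t).
by rewrite subrr expi0 t0 mul0r oner_eq0.
Qed.

Lemma expiB s t : expi (s - t) = expi s / expi t.
Proof. by apply: (mulIf (expi_neq0 t)); rewrite -expiD subrK mulfVK ?expi_neq0. Qed.

Lemma expiMn t m : expi (t *+ m) = expi t ^+ m.
Proof.
elim: m => [|m IHm]; first by rewrite mulr0n expi0 expr0.
by rewrite mulrSr expiD IHm exprSr.
Qed.

Lemma expi_int (k : int) : expi k%:~R = 1 :> R[i].
Proof.
have expi_nat n : expi n%:R = 1 :> R[i].
  have expi1 : expi (1 : R) = 1 by rewrite /expi mulr1 mulr_natl cos2pi sin2pi.
  by rewrite (expiMn 1 n) expi1 expr1n.
case: k => n; first exact: expi_nat.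
by rewrite NegzE rmorphN -[- _]sub0r expiB expi0 expi_nat divr1.
Qed.

Lemma cos_lt1 t : 0 < t < 2 * pi -> cos t < 1.
Proof.
have cos_lt1_pi y : 0 < y <= pi -> cos y < 1.
  case/andP=> y_gt0 y_lepi.
  have pi_ge0 := @pi_ge0 R.
  by rewrite -cos0 ltr_cos // !in_itv /=; apply/andP; split=> //; lra.
wlog t_lepi : t / t <= pi => [wlog_t /andP[t_gt0 t_lt2pi]|t_pi]; last first.
  by apply: cos_lt1_pi; case/andP: t_pi => -> _.
have [|pi_lt_t] := leP t pi; first by move=> ?; apply: wlog_t; rewrite // t_gt0.
rewrite -[t]opprK cosN -(cosD2pi (- t)) cos_lt1_pi //.
by rewrite mulr2n; apply/andP; split; lra.
Qed.

Lemma expi_eq1 t : expi t = 1 -> exists k : int, t = k%:~R.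
Proof.
move=> expit1; exists (Num.floor t); apply/eqP; rewrite -subr_eq0.
have [cos_u1 _] : expi (t - (Num.floor t)%:~R) = 1.
  by rewrite expiB expit1 expi_int divr1.
have : 0 <= t - (Num.floor t)%:~R < 1.
  by have := floor_itv t; rewrite subr_ge0 ltrBlDl intrD addrC.
move: cos_u1; set u := t - _ => cos_u1 /andP[u_ge0 u_lt1].
apply/negPn/negP => u_neq0; have pi_gt0 := @pi_gt0 R.
have u_gt0 : 0 < u by rewrite lt_neqAle eq_sym u_neq0.
suff : cos (2 * pi * u) < 1 by rewrite cos_u1 ltxx.
apply: cos_lt1; rewrite !mulr_gt0 //=.
by rewrite -[X in _ < X]mulr1 ltr_pM2l ?mulr_gt0.
Qed.

Lemma expi_not_unity t : irrational t -> forall m, (0 < m)%N -> expi t ^+ m != 1.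
Proof.
move=> irr_t m m_gt0; apply/eqP; rewrite -expiMn => /expi_eq1[k tmk]; apply: irr_t.
apply/rationalP; exists k, m.
by rewrite -tmk -[t *+ m]mulr_natr mulfK // pnatr_eq0 -lt0n.
Qed.

End Expi.

(** * Roots off the unit circle *)

Lemma exists_argmax_real (C : numDomainType) (f : nat -> C) N :
  (0 < N)%N -> (forall i, f i \is Num.real) ->
  exists2 i, (i < N)%N & forall j, (j < N)%N -> f j <= f i.
Proof.
move=> + f_real; elim: N => // -[_ _|N IHN _]; first by exists 0%N => // -[].
have [i iN max_i] := IHN isT.
have [le_fi_fN|le_fN_fi] := orP (real_leVge (f_real i) (f_real N.+1)).
  exists N.+1 => // j; rewrite ltnS leq_eqVlt => /orP[/eqP->//|jN].
  exact: le_trans (max_i _ jN) le_fi_fN.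
exists i; first exact: ltnW.
by move=> j; rewrite ltnS leq_eqVlt => /orP[/eqP->|/max_i].
Qed.

Lemma exists_extremal_norms (C : numDomainType) N (u : nat -> C) i0 i1 :
  (i0 < N)%N -> (i1 < N)%N -> `|u i0| != `|u i1| ->
  exists a b, [/\ (a < N)%N, (b < N)%N, `|u b| < `|u a|,
    forall j, (j < N)%N -> `|u j| <= `|u a| & forall j, (j < N)%N -> `|u b| <= `|u j|].
Proof.
move=> i0N i1N neq_u01; have N_gt0 : (0 < N)%N by apply: leq_ltn_trans i0N.
have norm_real i : `|u i| \is Num.real := normr_real _.
have [a aN max_a] := @exists_argmax_real C (fun i => `|u i|) N N_gt0 norm_real.
have oppnorm_real i : - `|u i| \is Num.real by rewrite realN normr_real.
have [b bN min_b] := @exists_argmax_real C (fun i => - `|u i|) N N_gt0 oppnorm_real.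
have {}min_b j : (j < N)%N -> `|u b| <= `|u j| by move/min_b; rewrite lerN2.
exists a, b; split=> //; rewrite lt_neqAle (le_trans (min_b _ i0N) (max_a _ i0N)) andbT.
apply: contraNneq neq_u01 => eq_uba; apply/eqP; apply: le_anti.
have le_u i j : (i < N)%N -> (j < N)%N -> `|u i| <= `|u j|.
  by move=> iN jN; rewrite (le_trans (max_a _ iN)) // -eq_uba min_b.
by rewrite !le_u.
Qed.

Lemma roots_off_unit_circle (C : numFieldType) (P : {poly C}) N (u : nat -> C) i0 i1 :
  ~~ root P 1 -> (forall i, (i < N)%N -> u i != 0) ->
  (forall i j, (i < N)%N -> (j < N)%N -> i != j -> root P (u i / u j)) ->
  (i0 < N)%N -> (i1 < N)%N -> `|u i0| != `|u i1| ->
  exists s, [/\ uniq s, size s = N, all (root P) s & all (fun x => `|x| != 1) s].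
Proof.
move=> P1 nz_u P_ratio i0N i1N neq_u01.
have [a [b [aN bN lt_ub_ua max_a min_b]]] := exists_extremal_norms i0N i1N neq_u01.
have ratio1 i j : (i < N)%N -> (j < N)%N -> u i / u j = 1 -> i = j.
  move=> iN jN ratio_ij; apply/eqP; apply: contraNT P1 => /P_ratio.
  by rewrite ratio_ij; apply.
have norm_ratio i j : (i < N)%N -> (j < N)%N -> `|u i / u j| = `|u i| / `|u j|.
  by move=> iN jN; rewrite normrM normfV.
(* Below the maximal modulus divide u_a by u_j (modulus > 1), at the maximal
   modulus divide u_b of minimal modulus by u_j (modulus < 1). *)
pose g j := if `|u j| < `|u a| then u a / u j else u b / u j.
have g_gt1 j : (j < N)%N -> `|u j| < `|u a| -> 1 < `|g j|.
  move=> jN lt_uj_ua; rewrite /g lt_uj_ua norm_ratio // ltr_pdivlMr ?mul1r //.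
  by rewrite normr_gt0 nz_u.
have g_lt1 j : (j < N)%N -> ~~ (`|u j| < `|u a|) -> `|g j| < 1.
  move=> jN /negPf ge_uj_ua; rewrite /g ge_uj_ua norm_ratio // ltr_pdivrMr ?mul1r.
    by rewrite (lt_le_trans lt_ub_ua) // real_leNgt ?normr_real ?ge_uj_ua.
  by rewrite normr_gt0 nz_u.
have g_off j : (j < N)%N -> `|g j| != 1.
  move=> jN; have [/(g_gt1 _ jN)|/(g_lt1 _ jN)] := boolP (`|u j| < `|u a|).
    by move/gt_eqF->.
  by move/lt_eqF->.
have g_root j : (j < N)%N -> root P (g j).
  move=> jN; rewrite /g; case: ifP => [lt_uj_ua|ge_uj_ua]; apply: P_ratio => //.
    by apply: contraTneq lt_uj_ua => <-; rewrite ltxx.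
  by apply: contraFneq ge_uj_ua => <-.
have g_inj : {in gtn N &, injective g}.
  move=> i j iN jN; have [lt_ui|ge_ui] := boolP (`|u i| < `|u a|).
    have [lt_uj|ge_uj] := boolP (`|u j| < `|u a|); last first.
      move=> gij; have := lt_trans (g_lt1 _ jN ge_uj) (g_gt1 _ iN lt_ui).
      by rewrite gij ltxx.
    rewrite /g lt_ui lt_uj => /(mulfI (nz_u _ aN))/invr_inj uij.
    by apply: ratio1 => //; rewrite uij divff ?nz_u.
  have [lt_uj|ge_uj] := boolP (`|u j| < `|u a|).
    by move=> gij; have := lt_trans (g_lt1 _ iN ge_ui) (g_gt1 _ jN lt_uj); rewrite gij ltxx.
  rewrite /g (negPf ge_ui) (negPf ge_uj) => /(mulfI (nz_u _ bN))/invr_inj uij.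
  by apply: ratio1 => //; rewrite uij divff ?nz_u.
exists [seq g j | j <- iota 0 N]; split.
- by rewrite map_inj_in_uniq ?iota_uniq // => i j; rewrite !mem_iota; apply: g_inj.
- by rewrite size_map size_iota.
- by apply/allP => x /mapP[j]; rewrite mem_iota => jN ->; apply: g_root.
by apply/allP => x /mapP[j]; rewrite mem_iota => jN ->; apply: g_off.
Qed.

(** * The polynomial A and its spectra *)

Lemma coef_sum_Xn (R : nzRingType) (s : seq nat) i : uniq s ->
  (\sum_(a <- s) 'X^a : {poly R})`_i = (i \in s)%:R.
Proof.
elim: s => [|a s IHs] /=; first by rewrite big_nil coef0.
case/andP=> a_notin_s uniq_s; rewrite big_cons coefD coefXn IHs // in_cons.
by have [->|] := eqVneq i a; rewrite ?(negPf a_notin_s) ?addr0 ?add0r.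
Qed.

Lemma sum_Xn_monic (R : nzRingType) (s : seq nat) : uniq s -> s != [::] ->
  (\sum_(a <- s) 'X^a : {poly R}) \is monic.
Proof.
move=> uniq_s; case: s uniq_s => // a0 s0 uniq_s _; set s := a0 :: s0 in uniq_s *.
have s_bounded a : a \in s -> (a <= \max_(b <- s) b)%N by move=> a_s; apply: leq_bigmax_seq.
have s_inhabited : exists a, a \in s by exists a0; rewrite mem_head.
case: (ex_maxnP s_inhabited s_bounded) => m m_s max_m.
have size_sum : size (\sum_(a <- s) 'X^a : {poly R}) = m.+1.
  apply/eqP; rewrite eqn_leq; apply/andP; split.
    apply/leq_sizeP => j lt_mj; rewrite coef_sum_Xn //.
    by case: (j \in s) / idP => [/max_m|//]; rewrite leqNgt lt_mj.
  rewrite ltnNge; apply/negP => /leq_sizeP/(_ m (leqnn m)).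
  by rewrite coef_sum_Xn // m_s => /eqP; rewrite oner_eq0.
by rewrite monicE /lead_coef size_sum coef_sum_Xn // m_s.
Qed.

Lemma horner1_sum_Xn (R : nzRingType) (s : seq nat) :
  (\sum_(a <- s) 'X^a : {poly R}).[1] = (size s)%:R.
Proof.
elim: s => [|a s IHs]; first by rewrite big_nil hornerC.
by rewrite big_cons hornerD hornerXn expr1n IHs -natr1 addrC.
Qed.

Lemma Apoly_intr (R : realType) (A : {fset nat}) :
  @Apoly R A = map_poly intr (\sum_(a <- A) 'X^a).
Proof.
rewrite /Apoly rmorph_sum; apply: eq_bigr => a _.
by apply/polyP => k; rewrite coef_map /= !coefXn; case: eqP.
Qed.

Lemma spectrum_expi_ratio (R : realType) (A : {fset nat}) (theta : nat -> R) i j :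
  is_spectrum A theta -> (i < #|` A|)%N -> (j < #|` A|)%N -> i != j ->
  root (@Apoly R A) (expi (theta i) / expi (theta j)).
Proof. by case=> _ _ _ thetaA iA jA ij; rewrite /root -expiB thetaA. Qed.

Local Open Scope fset_scope.

Theorem mainTheorem10 (R : realType) (A : {fset nat}) (theta : nat -> R) :
  0%N \in A -> (2 <= #|` A|)%N ->
  is_spectrum A theta -> @irrational R (theta 1%N) ->
  exists s : seq R[i],
    [/\ uniq s, size s = (#|` A|).-1,
        all (root (@Apoly R A)) s & all (fun x => `|x| != 1) s].
Proof.
move=> _ A2 spec irr1; set N := #|` A| in A2 *; set AZ : {poly int} := \sum_(a <- A) 'X^a.
have AZ_monic : AZ \is monic by rewrite sum_Xn_monic ?fset_uniq // -size_eq0 -lt0n ltnW.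
have not_root1 : ~~ root (@Apoly R A) 1.
  by rewrite /root /Apoly horner1_sum_Xn pnatr_eq0 -lt0n ltnW.
have [||||v [v_neq0 v_ratio v01]] :=
    @conjugate_family_off_unit_circle R[i] AZ N (fun i => expi (theta i)) AZ_monic A2.
- by case: spec => -> _ _ _; rewrite expi0.
- by move=> i _; apply: expi_neq0.
- by move=> i j iN jN ij; rewrite -Apoly_intr spectrum_expi_ratio.
- by move=> m; apply: expi_not_unity.
rewrite -Apoly_intr in v_ratio.
have [r [uniq_r size_r root_r off_r]] :=
  roots_off_unit_circle not_root1 v_neq0 v_ratio (ltnW A2) A2 v01.
exists (take N.-1 r); split.
- exact: take_uniq.
- by rewrite size_takel // size_r leq_pred.
- by apply/allP => x /mem_take/(allP root_r).
- by apply/allP => x /mem_take/(allP off_r).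
Qed.
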